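(* Let $k>t$ and $n>2k-t$, and let $\Gamma$ be a $(t+2)$-space in $\mathrm{PG}(n,q)$. Let $\mathcal{S}$ be the set of all $k$-spaces of $\mathrm{PG}(n,q)$ meeting $\Gamma$ in at least a $(t+1)$-space. Then $\mathcal{S}$ is a maximal set of $k$-spaces pairwise intersecting in at least a $t$-space, and \[|\mathcal{S}|=\left[{n-t-2\atop k-t-2}\right]_q\left(1+\theta_{t+2}q^{k-t-1}\frac{q^{n-k}-1}{q^{k-t-1}-1}\right).\]
   Context: $k$-spaces are projective subspaces of dimension $k$; ''intersecting in at least a $t$-space'' means the intersection has projective dimension at least $t$. Maximal means no further $k$-space can be added while keeping the property. $\left[{n\atop k}\right]_q=\frac{(q^n-1)\cdots(q^{n-k+1}-1)}{(q^k-1)\cdots(q-1)}$ for $k>0$, $=1$ for $k=0$; $\theta_m=\frac{q^{m+1}-1}{q-1}$. *)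

From HB Require Import structures.
From mathcomp Require Import all_boot all_order all_algebra all_field.
Set Implicit Arguments. Unset Strict Implicit. Unset Printing Implicit Defensive.
Import Order.TTheory GRing.Theory Num.Theory.

(* PG(n,q) is modelled over a finite field F with q = #|F| elements.
   Vector subspaces of F^(n+1) are represented canonically by square
   matrices A : 'M[F]_(n.+1) with A = <<A>>%MS (the canonical generator
   of their row space), so distinct subspaces are distinct matrices.
   A projective k-space is a vector subspace of rank k+1. *)

Section PG.
Variable F : finFieldType.
Variable n : nat.

Definition is_subspace (A : 'M[F]_(n.+1)) : bool := (<<A>>%MS == A).

Definition is_pspace (k : nat) (A : 'M[F]_(n.+1)) : bool :=
  is_subspace A && (\rank A == k.+1).

Definition meet_atleast (t : nat) (A B : 'M[F]_(n.+1)) : bool :=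
  t.+1 <= \rank (A :&: B)%MS.

Definition t_intersecting (k t : nat) (S : {set 'M[F]_(n.+1)}) : Prop :=
  (forall A, A \in S -> is_pspace k A) /\
  (forall A B, A \in S -> B \in S -> meet_atleast t A B).

Definition maximal_t_intersecting (k t : nat) (S : {set 'M[F]_(n.+1)}) : Prop :=
  t_intersecting k t S /\
  (forall X, is_pspace k X -> X \notin S -> ~ t_intersecting k t (X |: S)).

Definition pspaces_meeting (k s : nat) (G : 'M[F]_(n.+1)) : {set 'M[F]_(n.+1)} :=
  [set A : 'M[F]_(n.+1) | is_pspace k A && meet_atleast s A G].
End PG.

Local Open Scope ring_scope.

Definition gauss_binom (q m j : nat) : rat :=
  \prod_(i < j) (((q ^ (m - i))%N%:R - 1) / ((q ^ i.+1)%N%:R - 1)).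

Definition theta (q m : nat) : rat := ((q ^ m.+1)%N%:R - 1) / (q%:R - 1).

From mathcomp Require Import all_boot all_order all_algebra all_field.
From mathcomp Require Import zify ring.
Set Implicit Arguments. Unset Strict Implicit. Unset Printing Implicit Defensive.
Import GRing.Theory Num.Theory.

(* Two members of S each contain a hyperplane of the (t+2)-space Gamma, and two
   hyperplanes of Gamma share a t-space.  A k-space X outside S meets Gamma in at
   most a t-space, so some hyperplane H of Gamma meets X in at most a (t-1)-space;
   as n > 2k - t there is room to extend H to a k-space Y spanning as much as
   possible together with X, and then X and Y share at most a (t-1)-space although
   Y lies in S.
   For the size, double count the pairs (H, K) of a hyperplane H of Gamma and a
   k-space K containing it: a k-space through Gamma contains all theta_{t+2}
   hyperplanes, any other member of S exactly one, and other k-spaces none.  The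
   number of subspaces between two given ones is a Gaussian binomial, obtained by
   counting ordered bases. *)

Section SubspaceCounting.
Variables (F : finFieldType) (N : nat).
Local Notation q := #|F|.

Lemma card_rV_submx m (A : 'M[F]_(m, N)) :
  #|[set v : 'rV[F]_N | (v <= A)%MS]| = (q ^ \rank A)%N.
Proof.
rewrite -[\rank A]mul1n -card_mx.
have inj_base : injective (mulmxr (row_base A)).
  have /row_freeP[B baseK] := row_base_free A.
  by move=> r; apply: can_inj (mulmxr B) _ => u; rewrite /= -mulmxA baseK mulmx1.
rewrite -(card_image (inj_base 1%N)); apply: eq_card => v.
by rewrite inE -(eq_row_base A) (sameP submxP codomP).
Qed.

Lemma card_rV_submx_diff m p (A : 'M[F]_(m, N)) (B : 'M[F]_(p, N)) :
  (B <= A)%MS ->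
  #|[set v : 'rV[F]_N | (v <= A)%MS && ~~ (v <= B)%MS]| = (q ^ \rank A - q ^ \rank B)%N.
Proof.
move=> sBA; rewrite -!card_rV_submx -cardsDS; last first.
  by apply/subsetP => v; rewrite !inE => /submx_trans->.
by apply: eq_card => v; rewrite !inE andbC.
Qed.

Lemma mxrank_adds_rV m (A : 'M[F]_(m, N)) (v : 'rV[F]_N) :
  \rank (A + v)%MS = (\rank A + ~~ (v <= A)%MS)%N.
Proof.
have [vA | vNA] := boolP (v <= A)%MS; first by rewrite addn0 (addsmx_idPl vA).
rewrite addn1; apply/anti_leq/andP; split.
  rewrite (leq_trans (mxrank_adds_leqif A v).1) //.
  by rewrite -[(\rank A).+1]addn1 leq_add2l rank_leq_row.
by apply: rank_ltmx; rewrite ltmxE addsmxSl addsmx_sub submx_refl.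
Qed.

Definition free_extensions r m p (D : 'M[F]_(m, N)) (G : 'M[F]_(p, N)) :=
  [set M : 'M[F]_(r, N) | (\rank (D + M)%MS == \rank D + r)%N && (M <= G)%MS].

Lemma col_mx_free_extensions r m p (D : 'M[F]_(m, N)) (G : 'M[F]_(p, N))
    (v : 'rV[F]_N) (M : 'M[F]_(r, N)) :
  (col_mx v M \in free_extensions r.+1 D G) =
    [&& M \in free_extensions r D G, (v <= G)%MS & ~~ (v <= D + M)%MS].
Proof.
rewrite !inE (col_mx_sub v M G).
have -> : \rank (D + col_mx v M)%MS = \rank (D + M + v)%MS.
  by rewrite (adds_eqmx (eqmx_refl D) (eqmx_sym (addsmxE v M))) -addsmxA (addsmxC v).
rewrite mxrank_adds_rV; have [vDM | vNDM] /= := boolP (v <= D + M)%MS.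
  suff /ltn_eqF-> : (\rank (D + M) + 0 < \rank D + r.+1)%N by rewrite !andbF.
  rewrite addn0 addnS ltnS (leq_trans (mxrank_adds_leqif D M).1) //.
  by rewrite leq_add2l rank_leq_row.
by rewrite addn1 addnS eqSS andbT andbAC andbA.
Qed.

Lemma card_free_extensions r m p (D : 'M[F]_(m, N)) (G : 'M[F]_(p, N)) :
  (D <= G)%MS ->
  #|free_extensions r D G| = (\prod_(i < r) (q ^ \rank G - q ^ (\rank D + i)))%N.
Proof.
move=> sDG; elim: r => [|r IHr].
  rewrite big_ord0 -(expn0 q) -(mul0n N) -card_mx; apply: eq_card => M.
  by rewrite inE flatmx0 sub0mx addsmx0 addn0 eqxx.
rewrite big_ord_recr /= -{}IHr -sum_nat_const -sum1_card -add1n.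
rewrite (partition_big dsubmx [in free_extensions r D G]) /= => [|M]; last first.
  by rewrite -{1}(vsubmxK M) col_mx_free_extensions => /and3P[].
apply: eq_bigr => M; rewrite inE => /andP[/eqP rDM sMG].
rewrite (reindex (col_mx^~ M)) /=; last first.
  exists usubmx => [v _ | M' /andP[_ /eqP <-]]; first by rewrite col_mxKu.
  by rewrite vsubmxK.
rewrite -rDM -card_rV_submx_diff ?addsmx_sub ?sDG // -sum1_card.
by apply: eq_bigl => v; rewrite col_mx_free_extensions col_mxKd eqxx andbT !inE rDM eqxx sMG.
Qed.

Definition subspaces_between r m p (D : 'M[F]_(m, N)) (G : 'M[F]_(p, N)) :=
  [set K : 'M[F]_N | [&& <<K>>%MS == K, \rank K == (\rank D + r)%N, (D <= K)%MS & (K <= G)%MS]].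

Lemma card_subspaces_between_mul r m p (D : 'M[F]_(m, N)) (G : 'M[F]_(p, N)) :
  (D <= G)%MS ->
  (#|subspaces_between r D G| * \prod_(i < r) (q ^ (\rank D + r) - q ^ (\rank D + i)))%N =
    (\prod_(i < r) (q ^ \rank G - q ^ (\rank D + i)))%N.
Proof.
move=> sDG; rewrite -(card_free_extensions r sDG) -sum_nat_const -sum1_card.
rewrite (partition_big (fun M : 'M_(r, N) => <<(D + M)%MS>>%MS)
                      [in subspaces_between r D G]) /= => [|M].
  apply: eq_bigr => K; rewrite inE => /and4P[/eqP defK /eqP rK sDK sKG].
  rewrite -rK -(card_free_extensions r sDK) -sum1_card; apply: eq_bigl => M.
  rewrite !inE; apply/andP/andP => [[/eqP rDM sMK] | [/andP[/eqP rDM _] /eqP <-]].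
    have sDMK : (D + M <= K)%MS by rewrite addsmx_sub sDK.
    rewrite rDM eqxx (submx_trans sMK sKG) -defK; split => //; apply/eqP/eq_genmx/eqmxP.
    by rewrite -(mxrank_leqif_eq sDMK).2 rDM rK.
  by rewrite rDM genmxE addsmxSr.
rewrite !inE => /andP[/eqP rDM sMG].
by rewrite genmx_id eqxx mxrank_gen rDM eqxx !genmxE addsmxSl addsmx_sub sDG sMG.
Qed.
End SubspaceCounting.

Local Open Scope ring_scope.

Section GaussianBinomial.
Variable q : nat.
Hypothesis q_gt1 : (1 < q)%N.

Lemma natr_expBn1_neq0 e : (0 < e)%N -> ((q ^ e)%N%:R - 1 : rat) != 0.
Proof. by move=> e_gt0; rewrite subr_eq0 pnatr_eq1 -(expn0 q) eqn_exp2l ?gtn_eqF. Qed.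

Lemma natr_expB (a b : nat) : (b <= a)%N ->
  ((q ^ a - q ^ b)%N%:R : rat) = (q ^ b)%N%:R * ((q ^ (a - b))%N%:R - 1).
Proof.
move=> le_ba; rewrite natrB ?leq_pexp2l ?(ltnW q_gt1) //.
by rewrite mulrBr mulr1 -natrM -expnD subnKC.
Qed.

Lemma gauss_binom_ratio (x g d r : nat) : (d + r <= g)%N ->
  (x * \prod_(i < r) (q ^ (d + r) - q ^ (d + i)))%N =
    (\prod_(i < r) (q ^ g - q ^ (d + i)))%N ->
  (x%:R : rat) = gauss_binom q (g - d) r.
Proof.
move=> le_g /(congr1 (fun m => (m%:R : rat))); rewrite natrM !natr_prod.
have factor a : (d + r <= a)%N -> \prod_(i < r) ((q ^ a - q ^ (d + i))%N%:R : rat) =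
    \prod_(i < r) ((q ^ (d + i))%N%:R : rat) * \prod_(i < r) ((q ^ (a - d - i))%N%:R - 1).
  move=> le_a; rewrite -big_split; apply: eq_bigr => i _ /=.
  by rewrite natr_expB ?subnDA //; have := ltn_ord i; lia.
rewrite !factor // mulrCA => /mulfI eq_prod.
have /eq_prod {}eq_prod : \prod_(i < r) ((q ^ (d + i))%N%:R : rat) != 0.
  by apply/prodf_neq0 => i _; rewrite pnatr_eq0 expn_eq0; lia.
have den_neq0 : \prod_(i < r) ((q ^ i.+1)%N%:R - 1 : rat) != 0.
  by apply/prodf_neq0 => i _; apply: natr_expBn1_neq0.
rewrite /gauss_binom prodf_div -eq_prod.
rewrite (reindex_inj rev_ord_inj) /= in den_neq0 *.
suff -> : \prod_(i < r) ((q ^ (d + r - d - i))%N%:R - 1 : rat) =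
    \prod_(i < r) ((q ^ (r - i.+1).+1)%N%:R - 1) by rewrite mulfK.
by apply: eq_bigr => i _; rewrite addKn subnSK.
Qed.

Lemma gauss_binomSS m j : gauss_binom q m.+1 j.+1 =
  gauss_binom q m j * ((q ^ m.+1)%N%:R - 1) / ((q ^ j.+1)%N%:R - 1).
Proof.
rewrite /gauss_binom !prodf_div big_ord_recl [in X in _ / X]big_ord_recr /= subn0.
under eq_bigr => i _ do rewrite /bump /= subSS.
have den_neq0 : \prod_(i < j) ((q ^ i.+1)%N%:R - 1 : rat) != 0.
  by apply/prodf_neq0 => i _; apply: natr_expBn1_neq0.
have lead_neq0 := natr_expBn1_neq0 (ltn0Sn j).
by field; rewrite lead_neq0 den_neq0.
Qed.

Lemma gauss_binom_theta m : gauss_binom q m.+1 m = theta q m.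
Proof.
have q1_neq0 : (q%:R - 1 : rat) != 0.
  by have := natr_expBn1_neq0 (ltn0Sn 0); rewrite expn1.
elim: m => [|m IHm]; first by rewrite /gauss_binom big_ord0 /theta expn1 divff.
rewrite gauss_binomSS IHm /theta.
have lead_neq0 := natr_expBn1_neq0 (ltn0Sn m).
by field; rewrite lead_neq0 q1_neq0.
Qed.
End GaussianBinomial.

Lemma card_subspaces_between (F : finFieldType) N r m p
    (D : 'M[F]_(m, N)) (G : 'M[F]_(p, N)) :
  (D <= G)%MS -> (\rank D + r <= \rank G)%N ->
  (#|subspaces_between r D G|%:R : rat) = gauss_binom #|F| (\rank G - \rank D) r.
Proof.
move=> sDG le_rG.
apply: gauss_binom_ratio (card_subspaces_between_mul r sDG) => //.
exact: finNzRing_gt1.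
Qed.

Lemma card_set_condE (T : finType) (A : {pred T}) (c : pred T) :
  #|[set x in A | c x]| = (\sum_(x in A) c x)%N.
Proof. by rewrite -sum1dep_card big_mkcondr; apply: eq_bigr => x _; case: (c x). Qed.

Section Hyperplanes.
Variables (F : finFieldType) (N : nat).

Definition hyperplanes (G : 'M[F]_N) := subspaces_between (\rank G).-1 (0 : 'M[F]_N) G.

Lemma card_hyperplanes m (G : 'M[F]_N) :
  \rank G = m.+1 -> (#|hyperplanes G|%:R : rat) = theta #|F| m.
Proof.
move=> rG; rewrite card_subspaces_between ?sub0mx ?mxrank0 ?rG //.
by rewrite subn0 gauss_binom_theta ?finNzRing_gt1.
Qed.

Lemma card_hyperplanes_sub (G K : 'M[F]_N) :
  #|[set H in hyperplanes G | (H <= K)%MS]| =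
    if (G <= K)%MS then #|hyperplanes G| else ((\rank G).-1 <= \rank (K :&: G))%N.
Proof.
have [sGK | nsGK] := ifPn.
  apply: eq_card => H; rewrite !inE andb_idr // => /and4P[_ _ _ sHG].
  exact: submx_trans sHG sGK.
have ltCG : (\rank (K :&: G) < \rank G)%N.
  by apply: rank_ltmx; rewrite ltmxE capmxSr sub_capmx submx_refl andbT.
have sub_cap H : ((H <= G) && (H <= K))%MS = (H <= K :&: G)%MS by rewrite sub_capmx andbC.
case: leqP => [le_rC | lt_rC]; last first.
  apply/eqP; rewrite cards_eq0; apply/eqP/setP => H; rewrite !inE.
  apply/negP => /andP[/and4P[_ /eqP rH _ sHG] sHK]; rewrite mxrank0 add0n in rH.
  by move: lt_rC; rewrite ltnNge -rH mxrankS // -sub_cap sHG.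
have rC : \rank (K :&: G) = (\rank G).-1 by lia.
rewrite /= -(cards1 <<(K :&: G)%MS>>%MS); apply: eq_card => H.
rewrite !inE mxrank0 add0n -andbA.
apply/idP/eqP => [/and3P[/eqP defH /and3P[/eqP rH _ sHG] sHK] | ->].
  have sHC : (H <= K :&: G)%MS by rewrite -sub_cap sHG.
  rewrite -defH; apply/eq_genmx/eqmxP.
  by rewrite -(mxrank_leqif_eq sHC).2 rH rC.
by rewrite genmx_id eqxx mxrank_gen rC eqxx sub0mx !genmxE capmxSr capmxSl.
Qed.

Lemma sum_card_sup_hyperplanes (P : {set 'M[F]_N}) (G : 'M[F]_N) :
  (\sum_(H in hyperplanes G) #|[set K in P | (H <= K)%MS]| =
   #|hyperplanes G| * #|[set K in P | (G <= K)%MS]| +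
   #|[set K in P | ~~ (G <= K)%MS & ((\rank G).-1 <= \rank (K :&: G))%N]|)%N.
Proof.
under eq_bigr do rewrite card_set_condE.
rewrite exchange_big /=.
under eq_bigr => K _ do rewrite -card_set_condE card_hyperplanes_sub.
rewrite !card_set_condE big_distrr -big_split /=; apply: eq_bigr => K _.
by case: (G <= K)%MS; rewrite ?muln1 ?addn0 ?muln0.
Qed.
End Hyperplanes.

Section Constructions.
Variables (F : fieldType) (N : nat).

Lemma capmxS_eq0 m1 m2 m3 m4 (A : 'M[F]_(m1, N)) (B : 'M[F]_(m2, N))
    (C : 'M[F]_(m3, N)) (D : 'M[F]_(m4, N)) :
  (A <= C)%MS -> (B <= D)%MS -> (C :&: D)%MS = 0 -> (A :&: B)%MS = 0.
Proof. by move=> sAC sBD CD0; apply/eqP; rewrite -submx0 -CD0 capmxS. Qed.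

Lemma mxrank_capmx_within m1 m2 m3 (A : 'M[F]_(m1, N)) (B : 'M[F]_(m2, N))
    (G : 'M[F]_(m3, N)) :
  (\rank (A :&: G) + \rank (B :&: G) <= \rank (A :&: B) + \rank G)%N.
Proof.
rewrite -mxrank_sum_cap addnC leq_add ?mxrankS ?capmxS ?capmxSl //.
by rewrite addsmx_sub !capmxSr.
Qed.

Lemma exists_submx_rank m (U : 'M[F]_(m, N)) s :
  (s <= \rank U)%N -> exists2 V : 'M[F]_N, (V <= U)%MS & \rank V = s.
Proof.
move=> le_sU; exists ((pid_mx s : 'M_(N, \rank U)) *m row_base U).
  by rewrite -(eq_row_base U) submxMl.
rewrite mxrankMfree ?row_base_free // rank_pid_mx //.
exact: leq_trans le_sU (rank_leq_col U).
Qed.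

Lemma exists_supmx_rank m (A : 'M[F]_(m, N)) s :
  (\rank A <= s <= N)%N -> exists2 Y : 'M[F]_N, (A <= Y)%MS & \rank Y = s.
Proof.
case/andP=> le_As le_sN.
have [W sWAc rW] : exists2 W : 'M[F]_N, (W <= A^C)%MS & \rank W = (s - \rank A)%N.
  by apply: exists_submx_rank; rewrite mxrank_compl; lia.
exists (A + W)%MS; first exact: addsmxSl.
rewrite mxrank_disjoint_sum ?rW ?subnKC //.
exact: capmxS_eq0 (submx_refl A) sWAc (capmx_compl A).
Qed.

Lemma exists_supmx_far m p (A : 'M[F]_(m, N)) (U : 'M[F]_(p, N)) s :
  (A <= U)%MS -> (\rank A <= s <= N)%N ->
  exists Y : 'M[F]_N, [/\ (A <= Y)%MS, \rank Y = s &
                          (minn N (\rank U + (s - \rank A)) <= \rank (U + Y))%N].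
Proof.
move=> sAU /andP[le_As le_sN].
set r := minn (s - \rank A) (N - \rank U).
have [V sVUc rV] : exists2 V : 'M[F]_N, (V <= U^C)%MS & \rank V = r.
  by apply: exists_submx_rank; rewrite mxrank_compl geq_minr.
have rAV : \rank (A + V)%MS = (\rank A + r)%N.
  by rewrite mxrank_disjoint_sum ?rV // (capmxS_eq0 sAU sVUc (capmx_compl U)).
have [|Y sAVY rY] := @exists_supmx_rank _ (A + V)%MS s; first by rewrite rAV; lia.
exists Y; split; [exact: submx_trans (addsmxSl A V) sAVY | exact: rY |].
have rUV : \rank (U + V)%MS = (\rank U + r)%N.
  by rewrite mxrank_disjoint_sum ?rV // (capmxS_eq0 (submx_refl U) sVUc (capmx_compl U)).
have le_r := rank_leq_col U.
apply: leq_trans (mxrankS (addsmxS (submx_refl U) (submx_trans (addsmxSr A V) sAVY))).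
rewrite rUV /r; lia.
Qed.

Lemma exists_hyperplane_meeting (G X : 'M[F]_N) :
  (0 < \rank G)%N ->
  exists H : 'M[F]_N, [/\ (H <= G)%MS, \rank H = (\rank G).-1 &
                          (\rank (H :&: X) <= (\rank (X :&: G)).-1)%N].
Proof.
move=> rG_gt0; set d := \rank (X :&: G).
have rGX : \rank (G :&: X) = d by rewrite capmxC.
have rC : \rank (G :\: X) = (\rank G - d)%N.
  by have := mxrank_cap_compl G X; rewrite rGX; lia.
have [D sDGX rD] : exists2 D : 'M[F]_N, (D <= G :&: X)%MS & \rank D = d.-1.
  by apply: exists_submx_rank; rewrite rGX leq_pred.
have [C sCGX rC'] :
    exists2 C : 'M[F]_N, (C <= G :\: X)%MS & \rank C = ((\rank G).-1 - d.-1)%N.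
  by apply: exists_submx_rank; rewrite rC; lia.
have CX0 : (C :&: X)%MS = 0 := capmxS_eq0 sCGX (submx_refl X) (capmx_diff G X).
have sDX : (D <= X)%MS := submx_trans sDGX (capmxSr G X).
have le_dG : (d <= \rank G)%N by rewrite -rGX mxrankS ?capmxSl.
have rDC : \rank (D + C)%MS = (\rank G).-1.
  rewrite mxrank_disjoint_sum ?rD ?rC'; first lia.
  by rewrite capmxC (capmxS_eq0 (submx_refl C) sDX CX0).
exists (D + C)%MS; split => //.
  by rewrite addsmx_sub (submx_trans sDGX (capmxSl G X)) (submx_trans sCGX (diffmxSl G X)).
have := mxrank_sum_cap (D + C)%MS X; have := mxrank_sum_cap C X.
have := mxrankS (addsmxS (addsmxSr D C) (submx_refl X)).
rewrite CX0 mxrank0 rDC rC'; lia.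
Qed.
End Constructions.

Section ProjectiveSpace.
Variables (F : finFieldType) (n : nat).
Local Notation q := #|F|.

Definition pspaces k := [set A : 'M[F]_n.+1 | is_pspace k A].

Lemma card_pspaces_sup k (H : 'M[F]_n.+1) : (\rank H <= k.+1)%N -> (k <= n)%N ->
  (#|[set K in pspaces k | (H <= K)%MS]|%:R : rat) =
    gauss_binom q (n.+1 - \rank H) (k.+1 - \rank H).
Proof.
move=> le_Hk le_kn; rewrite -[X in gauss_binom _ (X - _)](mxrank1 F n.+1).
rewrite -card_subspaces_between ?submx1 ?subnKC ?mxrank1 //.
congr (_%:R); apply: eq_card => K; rewrite !inE submx1 andbT subnKC //.
by rewrite /is_pspace /is_subspace andbA.
Qed.

Lemma pspaces_meeting_t_intersecting k t (Gamma : 'M[F]_n.+1) :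
  is_pspace (t + 2) Gamma -> t_intersecting k t (pspaces_meeting k (t + 1) Gamma).
Proof.
case/andP=> _ /eqP rG; split=> [A | A B]; first by rewrite inE => /andP[].
rewrite !inE /meet_atleast => /andP[_ mA] /andP[_ mB].
by have := mxrank_capmx_within A B Gamma; rewrite rG; lia.
Qed.

Lemma pspaces_meeting_maximal k t (Gamma : 'M[F]_n.+1) :
  (t < k)%N -> (2 * k - t < n)%N -> is_pspace (t + 2) Gamma ->
  maximal_t_intersecting k t (pspaces_meeting k (t + 1) Gamma).
Proof.
move=> lt_tk lt_kn pG; split; first exact: pspaces_meeting_t_intersecting.
move=> X pX XnS [_ meetX]; have [_ /eqP rG] := andP pG; have [_ /eqP rX] := andP pX.
have rXG : (\rank (X :&: Gamma) <= t.+1)%N.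
  by move: XnS; rewrite inE pX /meet_atleast; lia.
have [|H [sHG rH rHX]] := exists_hyperplane_meeting (G := Gamma) X; first by rewrite rG.
have [|Y [sHY rY rXY]] := exists_supmx_far (s := k.+1) (addsmxSl H X).
  by rewrite rH rG; lia.
have YS : <<Y>>%MS \in pspaces_meeting k (t + 1) Gamma.
  rewrite inE /is_pspace /is_subspace genmx_id eqxx mxrank_gen rY eqxx /meet_atleast.
  have sHYG : (H <= Y :&: Gamma)%MS by rewrite sub_capmx sHY sHG.
  rewrite (cap_eqmx (genmxE Y) (eqmx_refl Gamma)) (leq_trans _ (mxrankS sHYG)) //.
  by rewrite rH rG addn1 addn2.
have := meetX X <<Y>>%MS (setU11 _ _) (setU1r _ YS).
rewrite /meet_atleast (cap_eqmx (eqmx_refl X) (genmxE Y)).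
have := mxrank_sum_cap H X; have := mxrank_sum_cap X Y.
have sHXY : (H + X + Y <= X + Y)%MS.
  by rewrite !addsmx_sub addsmxSl addsmxSr (submx_trans sHY (addsmxSr X Y)).
have := mxrankS sHXY; rewrite rX rY rH rG; lia.
Qed.

Lemma card_pspaces_meeting k t (Gamma : 'M[F]_n.+1) :
  (t.+1 < k)%N -> (k <= n)%N -> is_pspace (t + 2) Gamma ->
  (#|pspaces_meeting k (t + 1) Gamma|%:R : rat) =
    gauss_binom q (n - t - 2) (k - t - 2) *
    (1 + theta q (t + 2) * (q ^ (k - t - 1))%N%:R *
         (((q ^ (n - k))%N%:R - 1) / ((q ^ (k - t - 1))%N%:R - 1))).
Proof.
move=> lt_tk le_kn /andP[_ /eqP rG]; have q_gt1 := finNzRing_gt1 F.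
set A := gauss_binom q (n - t - 2) (k - t - 2).
set y := (q ^ (k - t - 1))%N%:R; set z := (q ^ (n - k))%N%:R.
have cardA : (#|[set K in pspaces k | (Gamma <= K)%MS]|%:R : rat) = A.
  rewrite card_pspaces_sup //; last by rewrite rG; lia.
  by rewrite rG; congr gauss_binom; lia.
have cardB H : H \in hyperplanes Gamma ->
    (#|[set K in pspaces k | (H <= K)%MS]|%:R : rat) = A * (y * z - 1) / (y - 1).
  rewrite inE mxrank0 add0n rG => /and4P[_ /eqP rH _ _].
  rewrite card_pspaces_sup ?rH //; last by lia.
  have -> : (n.+1 - (t + 2).+1.-1 = (n - t - 2).+1)%N by lia.
  have -> : (k.+1 - (t + 2).+1.-1 = (k - t - 2).+1)%N by lia.
  rewrite gauss_binomSS // /y /z -natrM -expnD.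
  by congr (_ * ((q ^ _)%N%:R - 1) / ((q ^ _)%N%:R - 1)); lia.
have cardS : #|pspaces_meeting k (t + 1) Gamma| =
    (#|[set K in pspaces k | (Gamma <= K)%MS]| +
     #|[set K in pspaces k | ~~ (Gamma <= K)%MS & ((\rank Gamma).-1 <= \rank (K :&: Gamma))%N]|)%N.
  have -> : pspaces_meeting k (t + 1) Gamma =
      [set K in pspaces k | ((\rank Gamma).-1 <= \rank (K :&: Gamma))%N].
    by apply/setP => K; rewrite !inE /meet_atleast rG addn1 addn2.
  rewrite !card_set_condE -big_split; apply: eq_bigr => K _.
  have [sGK | //] := boolP (Gamma <= K)%MS.
  by rewrite (capmx_idPr sGK) leq_pred.
have := congr1 (fun m => m%:R : rat) (sum_card_sup_hyperplanes (pspaces k) Gamma).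
rewrite natr_sum (eq_bigr _ cardB) sumr_const -[_ *+ #|_|]mulr_natl.
rewrite natrD natrM cardA (card_hyperplanes rG) cardS natrD cardA.
move/esym/(canRL (addKr _))->.
have y1_neq0 : y - 1 != 0 by apply: natr_expBn1_neq0 => //; lia.
by field.
Qed.
End ProjectiveSpace.

Theorem mainTheorem5 (F : finFieldType) (n k t : nat) (Gamma : 'M[F]_(n.+1)) :
  (t < k)%N -> (2 * k - t < n)%N -> is_pspace (t + 2) Gamma ->
  let q := #|F| in
  let S := pspaces_meeting k (t + 1) Gamma in
  maximal_t_intersecting k t S /\
  ((t.+1 < k)%N ->
   (#|S|%:R : rat) =
     gauss_binom q (n - t - 2) (k - t - 2) *
     (1 + theta q (t + 2) * (q ^ (k - t - 1))%N%:R *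
          (((q ^ (n - k))%N%:R - 1) / ((q ^ (k - t - 1))%N%:R - 1)))).
Proof.
move=> lt_tk lt_kn pG q S; split; first exact: pspaces_meeting_maximal.
by move=> lt_t1k; apply: card_pspaces_meeting => //; lia.
Qed.
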